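(* Let $\alpha,\beta\in\mathbb{C}$ with $(\alpha,\beta)\notin\mathbb{Z}^2$. Then $\mathrm{H}^1(\mathcal{W},\mathcal{F}_\alpha\otimes\mathcal{F}_\beta)=0$ if $\alpha+\beta\neq 1$, and if $\alpha+\beta=1$ then $\mathrm{H}^1(\mathcal{W},\mathcal{F}_{1-\beta}\otimes\mathcal{F}_\beta)$ is one-dimensional, spanned by the class of the 1-cocycle $\mathrm{d}_{1-\beta,\beta}$ defined by $$\mathrm{d}_{1-\beta,\beta}(L_n)=\begin{cases}\sum_{i=0}^{n-1}(i-n\beta)v_i\otimes v_{n-i},&n\geq1;\\ 0,&n=0;\\ -\sum_{i=n}^{-1}(i-n\beta)v_i\otimes v_{n-i},&n\leq -1.\end{cases}$$
   Context: The Witt algebra $\mathcal{W}$ is the complex Lie algebra with basis $\{L_n\mid n\in\mathbb{Z}\}$ and bracket $[L_m,L_n]=(m-n)L_{m+n}$. For $\alpha\in\mathbb{C}$, the tensor density module $\mathcal{F}_\alpha$ has basis $\{v_n\mid n\in\mathbb{Z}\}$ with $L_m\cdot v_n=-(\alpha m+n)v_{m+n}$. The tensor product $\mathcal{F}_\alpha\otimes\mathcal{F}_\beta$ is a $\mathcal{W}$-module via $L_m\cdot(v_i\otimes v_j)=-(i+\alpha m)v_{m+i}\otimes v_j-(j+\beta m)v_i\otimes v_{m+j}$. For a Lie algebra $L$ and $L$-module $M$, $\mathrm{Der}(L,M)$ is the space of 1-cocycles (linear $d:L\to M$ with $d([x,y])=x\cdot d(y)-y\cdot d(x)$), $\mathrm{Inn}(L,M)$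 the space of 1-coboundaries $d_v(x)=x\cdot v$ ($v\in M$), and $\mathrm{H}^1(L,M)=\mathrm{Der}(L,M)/\mathrm{Inn}(L,M)$. *)

From mathcomp Require Import all_boot all_order all_algebra complex.
From mathcomp Require Import Rstruct.
Set Implicit Arguments. Unset Strict Implicit. Unset Printing Implicit Defensive.
Import Order.TTheory GRing.Theory Num.Theory.
Local Open Scope ring_scope.

Definition CC : Type := complex Rdefinitions.R.

(* An element  sum_{i,j} f(i,j) v_i (x) v_j  of F_alpha (x) F_beta is
   represented by its coefficient function f : int -> int -> CC, which must be
   finitely supported. *)
Definition tens := int -> int -> CC.

Definition fin_supp (f : tens) : Prop :=
  exists N : int, forall i j : int,
    (N < `|i|) || (N < `|j|) -> f i j = 0.

(* The action of L_m on F_alpha (x) F_beta, in coefficients: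
   L_m (v_i (x) v_j) = -(i + alpha m) v_{m+i} (x) v_j - (j + beta m) v_i (x) v_{m+j},
   so the coefficient of v_a (x) v_b in L_m . f is
   -((a-m) + alpha m) f(a-m,b) - ((b-m) + beta m) f(a,b-m). *)
Definition act (alpha beta : CC) (m : int) (f : tens) : tens :=
  fun a b =>
    - (((a - m)%:~R + alpha * m%:~R) * f (a - m) b)
    - (((b - m)%:~R + beta * m%:~R) * f a (b - m)).

(* A linear map d : W -> M is determined by its values d(L_n), n in Z
   (the L_n form a basis of W); we represent it by  d : int -> tens.
   1-cocycle condition d([L_m,L_n]) = L_m.d(L_n) - L_n.d(L_m), where by
   linearity d([L_m,L_n]) = (m-n) d(L_{m+n}). *)
Definition is_der (alpha beta : CC) (d : int -> tens) : Prop :=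
  (forall n, fin_supp (d n)) /\
  forall m n : int, forall a b : int,
    (m - n)%:~R * d (m + n) a b
    = act alpha beta m (d n) a b - act alpha beta n (d m) a b.

Definition is_inn (alpha beta : CC) (d : int -> tens) : Prop :=
  exists v : tens, fin_supp v /\
    forall n : int, forall a b : int, d n a b = act alpha beta n v a b.

Definition H1_zero (alpha beta : CC) : Prop :=
  forall d, is_der alpha beta d -> is_inn alpha beta d.

Definition dcoc (beta : CC) (n : int) : tens :=
  fun a b =>
    if (a + b == n) then
      if (0 < n) && (0 <= a) && (a < n) then a%:~R - n%:~R * beta
      else if (n < 0) && (n <= a) && (a < 0) then - (a%:~R - n%:~R * beta)
      else 0
    else 0.

Definition is_int (x : CC) : Prop := exists z : int, x = z%:~R.

From Pilot Require Import Defs.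
From mathcomp Require Import all_boot all_order all_algebra complex.
From mathcomp Require Import Rstruct ring zify.
From Stdlib Require Import Classical.
Import GRing.Theory Num.Theory.
Local Open Scope ring_scope.

(* L_0 acts on v_a (x) v_b by -(a + b), so subtracting a coboundary makes a
   cocycle d homogeneous (d(L_n) of weight n) with d(L_0) = 0.  Assume beta is not an
   integer (otherwise swap the two factors).  The recursion along a weight line then has
   nonzero pivots w - a +- beta, so L_1 is injective on vectors vanishing far to the left
   and L_(-1) on vectors vanishing far to the right.  Solve d(L_1) = L_1 . u with an infinite
   diagonal vector u = sum_a U(a) v_a (x) v_(-a) vanishing far to the left; the corrected
   cocycle then vanishes on L_(-1), L_(-2), and the resulting recurrences force U to be
   eventually 0, or eventually constant when alpha + beta = 1.  The constant part is
   d_(1-beta,beta), the formal coboundary of sum_(a >= 0) v_a (x) v_(-a).  What remains is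
   killed on L_2 by L_(-1), hence vanishes since L_(+-1), L_(+-2) generate W.  The same
   injectivity of L_1 shows that d_(1-beta,beta) is not inner. *)

Definition null (f : tens) : Prop := forall a b, f a b = 0.

Definition homogeneous (w : int) (f : tens) : Prop :=
  forall a b, a + b != w -> f a b = 0.

(* The diagonal vector sum_a U(a) v_a (x) v_(-a), possibly of infinite support. *)
Definition diag (U : int -> CC) : tens :=
  fun a b => if a + b == 0 then U a else 0.

Definition step (a : int) : CC := if 0 <= a then 1 else 0.

Lemma int_ind_from_below (P : int -> Prop) (N : int) :
  (forall a, a < N -> P a) -> (forall a, P (a - 1) -> P a) -> forall a, P a.
Proof.
move=> base succ.
suff upto : forall k : nat, forall a, a < N + k%:Z -> P a.
  by move=> a; apply: (upto (absz (a - N)).+1); lia.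
elim=> [|k IH] a ha; first by apply: base; lia.
have [lt_a|ge_a] := boolP (a < N + k%:Z); first exact: IH.
by apply: succ; apply: IH; lia.
Qed.

Lemma int_ind_from_above (P : int -> Prop) (N : int) :
  (forall a, N < a -> P a) -> (forall a, P (a + 1) -> P a) -> forall a, P a.
Proof.
move=> base pred a; rewrite -(opprK a).
apply: (@int_ind_from_below (fun a => P (- a)) (- N)) => [{}a ha|{}a].
- by apply: base; lia.
- by rewrite opprB addrC; apply: pred.
Qed.

Section FirstOrderRecurrence.
Variables (F : fieldType) (c1 c2 g : int -> F) (N : int).
Hypothesis c1_neq0 : forall a, c1 a != 0.

Fixpoint rec_sol (k : nat) : F :=
  match k with
  | 0 => g N / c1 N
  | k'.+1 => (g (N + k%:Z) + c2 (N + k%:Z) * rec_sol k') / c1 (N + k%:Z)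
  end.

Lemma first_order_recurrence_solvable : exists U : int -> F,
  (forall a, a < N -> U a = 0) /\
  forall a, N <= a -> c1 a * U a - c2 a * U (a - 1) = g a.
Proof.
exists (fun a => if a < N then 0 else rec_sol (absz (a - N))).
split=> [a -> //|a le_Na].
have [k ->] : exists k : nat, a = N + k%:Z by exists (absz (a - N)); lia.
rewrite (_ : (N + k%:Z < N) = false); last by lia.
rewrite (_ : absz (N + k%:Z - N)%R = k); last by lia.
case: k {le_Na} => [|k] /=.
  by rewrite (_ : N + 0%:Z - 1 < N); [rewrite addr0; field | lia].
rewrite (_ : (N + k.+1%:Z - 1 < N) = false); last by lia.
by rewrite (_ : absz (N + k.+1%:Z - 1 - N)%R = k); [field | lia].
Qed.

End FirstOrderRecurrence.

Section Action.
Variables alpha beta : CC.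
Local Notation act := (act alpha beta).

Definition cocycle (d : int -> tens) : Prop :=
  forall m n a b : int,
    (m - n)%:~R * d (m + n) a b = act m (d n) a b - act n (d m) a b.

Definition sub_cob (d : int -> tens) (v : tens) : int -> tens :=
  fun n a b => d n a b - act n v a b.

Lemma act_comm m n f a b :
  act m (act n f) a b - act n (act m f) a b = (m - n)%:~R * act (m + n) f a b.
Proof.
rewrite /Defs.act.
have -> : a - m - n = a - (m + n) by ring.
have -> : a - n - m = a - (m + n) by ring.
have -> : b - m - n = b - (m + n) by ring.
have -> : b - n - m = b - (m + n) by ring.
ring.
Qed.

Lemma act_ext m f g a b :
  (forall a b, f a b = g a b) -> act m f a b = act m g a b.
Proof. by move=> eq_fg; rewrite /Defs.act !eq_fg. Qed.

Lemma actB m f g a b :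
  act m (fun a b => f a b - g a b) a b = act m f a b - act m g a b.
Proof. rewrite /Defs.act; ring. Qed.

Lemma actD m f g a b :
  act m (fun a b => f a b + g a b) a b = act m f a b + act m g a b.
Proof. rewrite /Defs.act; ring. Qed.

Lemma actZ m c f a b : act m (fun a b => c * f a b) a b = c * act m f a b.
Proof. rewrite /Defs.act; ring. Qed.

Lemma act_null m f : null f -> null (act m f).
Proof. by move=> f0 a b; rewrite /Defs.act !f0; ring. Qed.

Lemma act0 f a b : act 0 f a b = - ((a + b)%:~R * f a b).
Proof. rewrite /Defs.act !subr0 rmorphD /=; ring. Qed.

Lemma act_line m f w a : act m f a (w + m - a) =
  - (((a - m)%:~R + alpha * m%:~R) * f (a - m) (w - (a - m)))
  - (((w - a)%:~R + beta * m%:~R) * f a (w - a)).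
Proof.
rewrite /Defs.act.
have -> : w + m - a - m = w - a by ring.
by have -> : w + m - a = w - (a - m) by ring.
Qed.

Lemma act_diag m U a b : act m (diag U) a b =
  if a + b == m then
    - (((a - m)%:~R + alpha * m%:~R) * U (a - m)) + (a%:~R - beta * m%:~R) * U a
  else 0.
Proof.
rewrite /Defs.act /diag.
have [wt|wt] := eqVneq (a + b) m.
  have -> : b = m - a by lia.
  have -> : (a - m + (m - a) == 0) = true by apply/eqP; ring.
  have -> : (a + (m - a - m) == 0) = true by apply/eqP; ring.
  ring.
have -> : (a - m + b == 0) = false by apply/eqP; lia.
have -> : (a + (b - m) == 0) = false by apply/eqP; lia.
ring.
Qed.

Lemma act_diag_line m U a : act m (diag U) a (m - a) =
  (a%:~R - beta * m%:~R) * U a - ((a - m)%:~R + alpha * m%:~R) * U (a - m).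
Proof.
rewrite act_diag (_ : a + (m - a) == m); last by apply/eqP; ring.
by rewrite addrC.
Qed.

Lemma diag_L1_line U a : act 1 (diag U) a (1 - a) =
  (a%:~R - beta) * U a - ((a - 1)%:~R + alpha) * U (a - 1).
Proof. by rewrite act_diag_line rmorph1 !mulr1. Qed.

Lemma diag_Lm1_line U a : act (-1) (diag U) a (-1 - a) =
  (a%:~R + beta) * U a - ((a + 1)%:~R - alpha) * U (a + 1).
Proof. by rewrite act_diag_line opprK rmorphN rmorph1 !mulrN1 opprK. Qed.

Lemma diag_Lm2_line U a : act (-2) (diag U) a (-2 - a) =
  (a%:~R + 2 * beta) * U a - ((a + 2)%:~R - 2 * alpha) * U (a + 2).
Proof. rewrite act_diag_line opprK rmorphN rmorph_nat; ring. Qed.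

Lemma act_diag_combination {U u V : int -> CC} {c : CC} n a b :
  (forall a, U a = u a + c * V a) ->
  act n (diag U) a b = act n (diag u) a b + c * act n (diag V) a b.
Proof.
move=> UE; rewrite -actZ -actD; apply: act_ext => x y.
by rewrite /diag; case: ifP => _; rewrite ?UE; ring.
Qed.

Lemma act_diag_step_far n a : 0 <= a - n -> 0 <= a ->
  act n (diag step) a (n - a) = n%:~R * (1 - alpha - beta).
Proof.
by move=> ge0_an ge0_a; rewrite act_diag_line /step ge0_an ge0_a intrB; ring.
Qed.

Lemma cocycle_cob v : cocycle (fun n => act n v).
Proof. by move=> m n a b; rewrite act_comm. Qed.

Lemma cocycle_sub_cob d v : cocycle d -> cocycle (sub_cob d v).
Proof.
move=> d_coc m n a b; rewrite /sub_cob.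
rewrite (actB m (d n) (fun a b => act n v a b)) (actB n (d m) (fun a b => act m v a b)).
rewrite mulrBr d_coc -(act_comm m n v); ring.
Qed.

Lemma cocycle_null_add e m n : cocycle e -> m != n ->
  null (e m) -> null (e n) -> null (e (m + n)).
Proof.
move=> e_coc neq_mn em0 en0 a b.
have := e_coc m n a b; rewrite !act_null // subrr => /eqP.
by rewrite mulf_eq0 intr_eq0 subr_eq0 (negbTE neq_mn) => /eqP.
Qed.

(* [L_{+-1}] and [L_{+-2}] generate the Witt algebra. *)
Lemma cocycle_null_generators e : cocycle e ->
  null (e 1) -> null (e (-1)) -> null (e 2) -> null (e (-2)) -> forall n, null (e n).
Proof.
move=> e_coc e1 em1 e2 em2.
have pos k : null (e k.+1%:Z) /\ null (e k.+2%:Z).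
  elim: k => [|k [_ IH]]; first by [].
  split=> //; rewrite (_ : k.+3%:Z = 1 + k.+2%:Z); last by lia.
  by apply: cocycle_null_add => //; lia.
have neg k : null (e (- k.+1%:Z)) /\ null (e (- k.+2%:Z)).
  elim: k => [|k [_ IH]]; first by [].
  split=> //; rewrite (_ : - k.+3%:Z = -1 + - k.+2%:Z); last by lia.
  by apply: cocycle_null_add => //; lia.
case=> [[|k]|k].
- by rewrite (_ : 0%:Z = 1 + -1) //; apply: cocycle_null_add.
- by case: (pos k).
- by rewrite NegzE; case: (neg k).
Qed.

End Action.

Lemma homogeneous_line_null {w : int} {f : tens} :
  homogeneous w f -> (forall a, f a (w - a) = 0) -> null f.
Proof.
move=> f_hom f_line a b; have [wt|wt] := eqVneq (a + b) w; last exact: f_hom.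
by rewrite -(f_line a); congr f; lia.
Qed.

Lemma fin_supp_act alpha beta m {f : tens} :
  fin_supp f -> fin_supp (act alpha beta m f).
Proof.
case=> N f0; exists (`|N| + `|m|)%:Z => a b far.
by rewrite /act !f0; [ring | lia..].
Qed.

Lemma fin_suppB {f g : tens} :
  fin_supp f -> fin_supp g -> fin_supp (fun a b => f a b - g a b).
Proof.
case=> N f0 [M g0]; exists (`|N| + `|M|)%:Z => a b far.
by rewrite f0 ?g0 ?subr0 //; lia.
Qed.

Lemma fin_suppD {f g : tens} :
  fin_supp f -> fin_supp g -> fin_supp (fun a b => f a b + g a b).
Proof.
case=> N f0 [M g0]; exists (`|N| + `|M|)%:Z => a b far.
by rewrite f0 ?g0 ?addr0 //; lia.
Qed.

Lemma fin_supp_diag (U : int -> CC) N :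
  (forall a, N < `|a| -> U a = 0) -> fin_supp (diag U).
Proof.
move=> U0; exists N => a b far; rewrite /diag.
by case: eqP => // wt; apply: U0; lia.
Qed.

Lemma intr_subr_neq0 {beta : CC} : ~ is_int beta -> forall z : int, z%:~R - beta != 0.
Proof.
by move=> nint z; apply/eqP => /eqP; rewrite subr_eq0 => /eqP eq_z; apply: nint; exists z.
Qed.

Lemma intr_addr_neq0 {beta : CC} : ~ is_int beta -> forall z : int, z%:~R + beta != 0.
Proof.
by move=> nint z; have := intr_subr_neq0 nint (- z); rewrite rmorphN -opprD oppr_eq0.
Qed.

Lemma diag_homogeneous U : homogeneous 0 (diag U).
Proof. by move=> a b wt; rewrite /diag (negbTE wt). Qed.

Lemma fin_supp_uniform (f : int -> tens) (K : nat) : (forall n, fin_supp (f n)) ->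
  exists N : int, 0 <= N /\ forall n a b, (`|n| <= K)%N -> N < `|a| -> f n a b = 0.
Proof.
move=> f_fin; elim: K => [|K [N [N_ge0 fN]]].
  case: (f_fin 0) => N f0; exists `|N|%:Z; split=> // n a b n0 far.
  by rewrite (_ : n = 0); [apply: f0; lia | lia].
case: (f_fin K.+1%:Z) => P fP; case: (f_fin (- K.+1%:Z)) => Q fQ.
exists (N + `|P|%:Z + `|Q|%:Z); split=> [|n a b n_le far]; first by lia.
have [n_le'|[->|->]] : (`|n| <= K)%N \/ n = K.+1%:Z \/ n = - K.+1%:Z by lia.
- by apply: fN => //; lia.
- by apply: fP; lia.
- by apply: fQ; lia.
Qed.

Lemma act_homogeneous alpha beta m {w : int} {f : tens} :
  homogeneous w f -> homogeneous (w + m) (act alpha beta m f).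
Proof. by move=> f_hom a b wt; rewrite /act !f_hom; [ring | apply/eqP; lia..]. Qed.

Section NonintegralBeta.
Variables alpha beta : CC.
Hypothesis beta_nonint : ~ is_int beta.
Local Notation act := (act alpha beta).
Local Notation cocycle := (cocycle alpha beta).
Local Notation sub_cob := (sub_cob alpha beta).

Lemma L1_kernel_line w N H :
  (forall a, a < N -> H a (w - a) = 0) ->
  (forall a, act 1 H a (w + 1 - a) = 0) -> forall a, H a (w - a) = 0.
Proof.
move=> H_low H_ker; apply: (@int_ind_from_below _ N H_low) => a IH.
have := H_ker a; rewrite act_line IH mulr0 oppr0 sub0r rmorph1 mulr1 => /eqP.
by rewrite oppr_eq0 mulf_eq0 (negbTE (intr_addr_neq0 beta_nonint _)) => /eqP.
Qed.

Lemma Lm1_kernel_line w N H :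
  (forall a, N < a -> H a (w - a) = 0) ->
  (forall a, act (-1) H a (w - 1 - a) = 0) -> forall a, H a (w - a) = 0.
Proof.
move=> H_up H_ker; apply: (@int_ind_from_above _ N H_up) => a IH.
have := H_ker a; rewrite act_line opprK IH mulr0 oppr0 sub0r rmorphN rmorph1 mulrN1.
by move/eqP; rewrite oppr_eq0 mulf_eq0 (negbTE (intr_subr_neq0 beta_nonint _)) => /eqP.
Qed.

Lemma L1_kernel_null w N H : homogeneous w H ->
  (forall a, a < N -> H a (w - a) = 0) -> null (act 1 H) -> null H.
Proof.
move=> H_hom H_low H_ker; apply: (homogeneous_line_null H_hom).
by apply: (@L1_kernel_line w N) => // a; apply: H_ker.
Qed.

Lemma Lm1_kernel_null w N H : homogeneous w H ->
  (forall a, N < a -> H a (w - a) = 0) -> null (act (-1) H) -> null H.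
Proof.
move=> H_hom H_up H_ker; apply: (homogeneous_line_null H_hom).
by apply: (@Lm1_kernel_line w N) => // a; apply: H_ker.
Qed.

Lemma cocycle_act_L0 e n a b :
  cocycle e -> act n (e 0) a b = (n - (a + b))%:~R * e n a b.
Proof.
move=> e_coc; have := e_coc 0 n a b.
rewrite sub0r add0r act0 rmorphB rmorphD rmorphN /= => e_n.
have -> : act n (e 0) a b = - ((a%:~R + b%:~R) * e n a b) - (- n%:~R * e n a b)
  by rewrite e_n; ring.
ring.
Qed.

Lemma cocycle_weight0_null e : cocycle e ->
  fin_supp (e 0) -> homogeneous 0 (e 0) -> null (e 0) /\ forall n, homogeneous n (e n).
Proof.
move=> e_coc [N e0_fin] e0_hom.
have e0_killed n a b : act n (e 0) a b = 0.
  have [wt|wt] := eqVneq (a + b) n.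
    by rewrite cocycle_act_L0 // wt subrr mul0r.
  by apply: (act_homogeneous _ _ n e0_hom); rewrite add0r.
have e0_null : null (e 0).
  apply: (@L1_kernel_null 0 (- N) _ e0_hom) => [a a_low|a b]; last exact: e0_killed.
  by apply: e0_fin; lia.
split=> // n a b wt; have := cocycle_act_L0 _ n a b e_coc.
rewrite e0_killed => /esym/eqP; rewrite mulf_eq0 intr_eq0 subr_eq0 eq_sym (negbTE wt).
by move/eqP.
Qed.

Lemma der_normalize d : is_der alpha beta d ->
  exists v, fin_supp v /\ null (sub_cob d v 0) /\ forall n, homogeneous n (sub_cob d v n).
Proof.
case=> d_fin d_coc.
pose v a b := if a + b == 0 then 0 else - d 0 a b / (a + b)%:~R.
have v_fin : fin_supp v.
  case: (d_fin 0) => N d0_fin; exists N => a b far.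
  by rewrite /v d0_fin // oppr0 mul0r; case: ifP.
exists v; split=> //; apply: cocycle_weight0_null.
- exact: cocycle_sub_cob.
- exact: fin_suppB (d_fin 0) (fin_supp_act alpha beta 0 v_fin).
- move=> a b wt; rewrite /sub_cob act0 /v (negbTE wt).
  by field; rewrite -intrD intr_eq0.
Qed.

Section DiagonalTail.
Variables (U : int -> CC) (M : int).
Hypothesis U_L1 : forall a, M < a -> act 1 (diag U) a (1 - a) = 0.

Lemma diag_tail_const : alpha + beta = 1 -> forall a, M <= a -> U a = U M.
Proof.
move=> sum1; have alphaE : alpha = 1 - beta by rewrite -sum1; ring.
apply: (@int_ind_from_below _ M) => [a ? ?|a IH le_Ma]; first by lia.
have [->//|lt_Ma] : a = M \/ M < a by lia.
have := U_L1 _ lt_Ma; rewrite diag_L1_line alphaE.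
rewrite (_ : (a - 1)%:~R + (1 - beta) = a%:~R - beta); last by rewrite intrB; ring.
move/eqP; rewrite -mulrBr mulf_eq0 (negbTE (intr_subr_neq0 beta_nonint _)) subr_eq0.
by move=> /eqP ->; apply: IH; lia.
Qed.

Lemma diag_tail_eq0_of_eq : alpha = beta -> alpha + beta != 1 ->
  (forall a, M < a -> act (-2) (diag U) a (-2 - a) = 0) -> forall a, M < a -> U a = 0.
Proof.
move=> eq_ab sum1 U_Lm2 a lt_Ma.
have nz : 2 * beta * (1 - beta) * (1 - 2 * beta) != 0.
  rewrite !mulf_neq0 ?pnatr_eq0 //.
  - by have := intr_subr_neq0 beta_nonint 0; rewrite sub0r oppr_eq0.
  - by have := intr_subr_neq0 beta_nonint 1; rewrite rmorph1.
  - apply: contra sum1 => /eqP h; rewrite eq_ab; apply/eqP.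
    by rewrite -[1](subrK (2 * beta)) h; ring.
have E1 := U_L1 (a + 1) ltac:(lia); have E2 := U_L1 (a + 2) ltac:(lia).
have E3 := U_Lm2 _ lt_Ma.
rewrite diag_L1_line (_ : a + 1 - 1 = a) in E1; last by ring.
rewrite diag_L1_line (_ : a + 2 - 1 = a + 1) in E2; last by ring.
rewrite diag_Lm2_line in E3.
suff : 2 * beta * (1 - beta) * (1 - 2 * beta) * U a = 0.
  by move/eqP; rewrite mulf_eq0 (negbTE nz) => /eqP.
rewrite eq_ab in E1 E2 E3.
set x := U a in E1 E3 *; set y := U (a + 1) in E1 E2; set z := U (a + 2) in E2 E3.
have -> : 2 * beta * (1 - beta) * (1 - 2 * beta) * x =
  ((a + 1)%:~R - beta) * ((a + 2)%:~R - beta) *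
    ((a%:~R + 2 * beta) * x - ((a + 2)%:~R - 2 * beta) * z)
  + ((a + 2)%:~R - 2 * beta) * ((a + 1)%:~R - beta) *
    (((a + 2)%:~R - beta) * z - ((a + 1)%:~R + beta) * y)
  + ((a + 2)%:~R - 2 * beta) * ((a + 1)%:~R + beta) *
    (((a + 1)%:~R - beta) * y - (a%:~R + beta) * x).
  by rewrite !intrD; ring.
by rewrite E1 E2 E3; ring.
Qed.

Lemma diag_tail_eq0_of_neq : alpha != beta -> alpha + beta != 1 ->
  (forall a, M < a -> act (-1) (diag U) a (-1 - a) = 0) -> forall a, M < a -> U a = 0.
Proof.
move=> neq_ab sum1 U_Lm1 a lt_Ma.
have nz : (alpha - beta) * (1 - alpha - beta) != 0.
  rewrite mulf_neq0 ?subr_eq0 //.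
  by apply: contra sum1 => /eqP <-; rewrite addrC subrK.
have E1 := U_L1 (a + 1) ltac:(lia); have E2 := U_Lm1 _ lt_Ma.
rewrite diag_L1_line (_ : a + 1 - 1 = a) in E1; last by ring.
rewrite diag_Lm1_line in E2.
suff : (alpha - beta) * (1 - alpha - beta) * U a = 0.
  by move/eqP; rewrite mulf_eq0 (negbTE nz) => /eqP.
set x := U a in E1 E2 *; set y := U (a + 1) in E1 E2.
have -> : (alpha - beta) * (1 - alpha - beta) * x =
  - ((a + 1)%:~R - alpha) * (((a + 1)%:~R - beta) * y - (a%:~R + alpha) * x)
  - ((a + 1)%:~R - beta) * ((a%:~R + beta) * x - ((a + 1)%:~R - alpha) * y).
  by rewrite !intrD; ring.
by rewrite E1 E2; ring.
Qed.

End DiagonalTail.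

Lemma diag_tail_decomposition (U : int -> CC) (M : int) : 0 <= M ->
  (forall a, a < - M -> U a = 0) ->
  (forall a, M < a -> act 1 (diag U) a (1 - a) = 0) ->
  (forall a, M < a -> act (-1) (diag U) a (-1 - a) = 0) ->
  (forall a, M < a -> act (-2) (diag U) a (-2 - a) = 0) ->
  exists (u : int -> CC) (c : CC), (forall a, M < `|a| -> u a = 0) /\
    (alpha + beta != 1 -> c = 0) /\
    forall a, U a = u a + c * step a.
Proof.
move=> M_ge0 U_low U_L1 U_Lm1 U_Lm2.
have [sum1|sum1] := eqVneq (alpha + beta) 1.
  exists (fun a => U a - U M * step a), (U M); split; last by split=> // a; ring.
  move=> a far; have [a_low|a_high] : a < - M \/ M < a by lia.
    rewrite U_low // /step (_ : (0 <= a) = false); [ring | lia].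
  rewrite (@diag_tail_const U M U_L1 sum1 a) /step; last by lia.
  rewrite (_ : (0 <= a) = true); [ring | lia].
exists U, 0; split; last by split=> // a; ring.
move=> a far; have [a_low|a_high] : a < - M \/ M < a by lia.
  exact: U_low.
have [eq_ab|neq_ab] := eqVneq alpha beta.
  exact: (@diag_tail_eq0_of_eq U M U_L1).
exact: (@diag_tail_eq0_of_neq U M U_L1).
Qed.

Section NormalizedCocycle.
Variable e : int -> tens.
Hypotheses (e_coc : cocycle e) (e_hom : forall n, homogeneous n (e n)).
Hypothesis e0_null : null (e 0).
Variable N : int.
Hypothesis N_ge0 : 0 <= N.
Hypothesis e_small : forall n a b, (`|n| <= 2)%N -> N < `|a| -> e n a b = 0.

Lemma solve_L1 : exists U : int -> CC,
  (forall a, a < - N -> U a = 0) /\ forall a b, e 1 a b = act 1 (diag U) a b.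
Proof.
have [U [U_low U_rec]] := @first_order_recurrence_solvable _
  (fun a => a%:~R - beta) (fun a => (a - 1)%:~R + alpha) (fun a => e 1 a (1 - a)) (- N)
  (intr_subr_neq0 beta_nonint).
exists U; split=> // a b; have [wt|wt] := eqVneq (a + b) 1; last first.
  by rewrite e_hom // act_diag (negbTE wt).
rewrite (_ : b = 1 - a) ?diag_L1_line; last by lia.
have [a_low|a_high] := boolP (a < - N); last by rewrite -U_rec //; lia.
by rewrite !U_low ?e_small; [ring | lia..].
Qed.

Section DiagonalPrimitive.
Variable U : int -> CC.
Hypothesis U_low : forall a, a < - N -> U a = 0.
Hypothesis U_L1 : forall a b, e 1 a b = act 1 (diag U) a b.

Let e' := sub_cob e (diag U).

Let e'_coc : cocycle e'. Proof. exact: cocycle_sub_cob. Qed.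

Let e'_hom n : homogeneous n (e' n).
Proof.
move=> a b wt; rewrite /e' /sub_cob e_hom //.
by rewrite (act_homogeneous _ _ n (diag_homogeneous U)) ?subr0 // add0r.
Qed.

Let e'_low n a : (`|n| <= 2)%N -> a < - N - 2 -> e' n a (n - a) = 0.
Proof.
by move=> n_le a_low; rewrite /e' /sub_cob act_diag_line !U_low ?e_small; [ring | lia..].
Qed.

Let e'0 : null (e' 0).
Proof. by move=> a b; rewrite /e' /sub_cob e0_null act_diag subr0; case: ifP => _; ring. Qed.

Let e'1 : null (e' 1).
Proof. by move=> a b; rewrite /e' /sub_cob U_L1 subrr. Qed.

Lemma sub_cob_diag_null_neg : null (e' (-1)) /\ null (e' (-2)).
Proof.
have killed k : (0 < k <= 2)%N -> null (e' (1 - k%:Z)) -> null (e' (- k%:Z)).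
  move=> k_range prev; apply: (@L1_kernel_null _ (- N - 2) _ (e'_hom _)) => [a a_low|a b].
    by apply: e'_low => //; lia.
  have := e'_coc 1 (- k%:Z) a b.
  by rewrite prev (act_null _ _ _ _ e'1) mulr0 subr0.
have e'm1 : null (e' (-1)) by apply: (killed 1%N); rewrite ?subrr.
by split=> //; apply: (killed 2%N) => //; rewrite (_ : 1 - 2%:Z = -1).
Qed.

Let e_split n a b : e n a b = e' n a b + act n (diag U) a b.
Proof. by rewrite /e' /sub_cob subrK. Qed.

Lemma diag_primitive_decomposition : exists u c,
  fin_supp u /\ (alpha + beta != 1 -> c = 0) /\
  forall n a b, e n a b = act n u a b + c * act n (diag step) a b.
Proof.
have [e'm1 e'm2] := sub_cob_diag_null_neg.
have U_far n a : null (e' n) -> (`|n| <= 2)%N -> N < a -> act n (diag U) a (n - a) = 0.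
  move=> e'n n_le far; have far' : N < `|a| by lia.
  by have := e_split n a (n - a); rewrite e'n add0r e_small // => /esym.
have [u [c [u_small [c0 U_dec]]]] := @diag_tail_decomposition U N N_ge0 U_low
  (fun a => U_far 1 a e'1 isT) (fun a => U_far (-1) a e'm1 isT)
  (fun a => U_far (-2) a e'm2 isT).
have e'E n a b : e' n a b = e n a b - act n (diag u) a b - c * act n (diag step) a b.
  by rewrite e_split (act_diag_combination _ _ n a b U_dec); ring.
have e'2 : null (e' 2).
  apply: (@Lm1_kernel_null 2 (N + 2) _ (e'_hom 2)) => [a far|a b].
    rewrite e'E e_small ?act_diag_step_far ?act_diag_line ?u_small; try lia.
    have [sum1|/c0 ->] := eqVneq (alpha + beta) 1; last ring.
    by rewrite (_ : 1 - alpha - beta = 0); [ring | rewrite -sum1; ring].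
  have := e'_coc (-1) 2 a b; rewrite (_ : -1 + 2 = 1) //.
  by rewrite e'1 (act_null _ _ _ _ e'm1) mulr0 subr0 => /esym.
have e'_null := @cocycle_null_generators _ _ e' e'_coc e'1 e'm1 e'2 e'm2.
exists (diag u), c; split; first exact: fin_supp_diag u_small.
split=> // n a b; apply/eqP; rewrite -subr_eq0 opprD addrA -e'E.
exact/eqP/e'_null.
Qed.

End DiagonalPrimitive.

Lemma normalized_cocycle_decomposition : exists u c,
  fin_supp u /\ (alpha + beta != 1 -> c = 0) /\
  forall n a b, e n a b = act n u a b + c * act n (diag step) a b.
Proof.
have [U [U_low U_L1]] := solve_L1.
exact: diag_primitive_decomposition U_low U_L1.
Qed.

End NormalizedCocycle.

Lemma der_decomposition d : is_der alpha beta d -> exists u c,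
  fin_supp u /\ (alpha + beta != 1 -> c = 0) /\
  forall n a b, d n a b = act n u a b + c * act n (diag step) a b.
Proof.
move=> d_der; have [d_fin d_coc] := d_der.
have [v [v_fin [e0 e_hom]]] := @der_normalize d d_der.
have [N [N_ge0 e_small]] := @fin_supp_uniform (sub_cob d v) 2
  (fun n => fin_suppB (d_fin n) (fin_supp_act alpha beta n v_fin)).
have [u [c [u_fin [c0 e_dec]]]] := @normalized_cocycle_decomposition (sub_cob d v)
  (cocycle_sub_cob _ _ _ v d_coc) e_hom e0 N N_ge0 e_small.
exists (fun a b => v a b + u a b), c; split; first exact: fin_suppD.
split=> // n a b; rewrite actD -addrA -e_dec /sub_cob.
by rewrite addrC subrK.
Qed.

End NonintegralBeta.

Definition flip (f : tens) : tens := fun a b => f b a.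

Lemma act_flip alpha beta m f a b :
  act alpha beta m (flip f) a b = act beta alpha m f b a.
Proof. rewrite /act /flip; ring. Qed.

Lemma fin_supp_flip f : fin_supp f -> fin_supp (flip f).
Proof. by case=> N f0; exists N => a b far; apply: f0; lia. Qed.

Lemma is_der_flip alpha beta d :
  is_der alpha beta d -> is_der beta alpha (fun n => flip (d n)).
Proof.
case=> d_fin d_coc; split=> [n|m n a b]; first exact: fin_supp_flip.
by rewrite (act_flip _ _ m (d n)) (act_flip _ _ n (d m)) /flip d_coc.
Qed.

Lemma der_decomposition_nonint {alpha beta : CC} {d : int -> tens} :
  ~ (is_int alpha /\ is_int beta) -> is_der alpha beta d -> exists u c,
  fin_supp u /\ (alpha + beta != 1 -> c = 0) /\
  forall n a b, d n a b = act alpha beta n u a b + c * act alpha beta n (diag step) a b.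
Proof.
move=> not_int d_der; have [beta_int|beta_nonint] := classic (is_int beta); last first.
  exact: der_decomposition.
have alpha_nonint : ~ is_int alpha by move=> alpha_int; apply: not_int.
have [u [c [u_fin [c0 d_dec]]]] :=
  @der_decomposition beta alpha alpha_nonint _ (is_der_flip _ _ _ d_der).
have {}c0 : c = 0.
  apply: c0; apply: contra_notN alpha_nonint => /eqP sum1.
  by case: beta_int => z betaE; exists (1 - z); rewrite intrB -betaE -sum1; ring.
exists (flip u), 0; split; first exact: fin_supp_flip.
split=> // n a b; rewrite (act_flip alpha beta n u a b) -[d n a b]/(flip (d n) b a).
by rewrite d_dec c0 !mul0r.
Qed.

Lemma dcocE beta n a b : dcoc beta n a b = act (1 - beta) beta n (diag step) a b.
Proof.
rewrite act_diag /dcoc /step; case: eqP => // wt.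
have [ge0_an|lt0_an] := boolP (0 <= a - n); have [ge0_a|lt0_a] := boolP (0 <= a);
  repeat case: ifP => ?; try lia; ring.
Qed.

Lemma is_der_dcoc beta : is_der (1 - beta) beta (dcoc beta).
Proof.
split=> [n|m n a b].
  exists `|n|%:Z => a b far; rewrite /dcoc; case: eqP => // wt.
  case: ifP => [/andP [/andP [? ?] ?]|_]; first lia.
  by case: ifP => [/andP [/andP [? ?] ?]|_] //; lia.
rewrite !dcocE (act_ext _ _ _ _ _ _ _ (dcocE beta n)) (act_ext _ _ _ _ _ _ _ (dcocE beta m)).
exact: cocycle_cob.
Qed.

Lemma dcoc_not_inn beta : ~ is_int beta -> ~ is_inn (1 - beta) beta (dcoc beta).
Proof.
move=> beta_nonint [v [[N v0] dcoc_v]].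
pose H a b := diag step a b - v a b.
have H_line : forall a, H a (0 - a) = 0.
  apply: (@L1_kernel_line (1 - beta) beta beta_nonint 0 (- (absz N)%:Z)) => a.
    move=> a_low; rewrite /H /diag /step v0; last by lia.
    by rewrite (_ : (0 <= a) = false); [case: eqP; rewrite subr0 | lia].
  by rewrite /H actB -dcocE dcoc_v subrr.
set a := (absz N)%:Z + 1; have a_far : (N < `|a|) || (N < `|0 - a|) by lia.
have := H_line a; rewrite /H /diag /step v0 //.
rewrite (_ : (a + (0 - a) == 0) = true); last by apply/eqP; ring.
rewrite (_ : (0 <= a) = true) ?subr0; last by rewrite /a; lia.
by move/eqP; rewrite oner_eq0.
Qed.

Theorem mainTheorem2 (alpha beta : CC) :
  ~ (is_int alpha /\ is_int beta) ->
  (alpha + beta != 1 -> H1_zero alpha beta) /\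
  (alpha + beta = 1 ->
     (* [d_{1-beta,beta}] is a nonzero class in H^1 ... *)
     is_der (1 - beta) beta (dcoc beta) /\
     ~ is_inn (1 - beta) beta (dcoc beta) /\
     (* ... spanning H^1(W, F_{1-beta} (x) F_beta) *)
     (forall d, is_der (1 - beta) beta d ->
        exists c : CC, is_inn (1 - beta) beta
          (fun n a b => d n a b - c * dcoc beta n a b))).
Proof.
move=> not_int; split.
  move=> sum1 d d_der.
  have [u [c [u_fin [c0 d_dec]]]] := der_decomposition_nonint not_int d_der.
  by exists u; split=> // n a b; rewrite d_dec c0 // mul0r addr0.
move=> sum1; have alphaE : alpha = 1 - beta by rewrite -sum1; ring.
have beta_nonint : ~ is_int beta.
  move=> [z betaE]; apply: not_int; split; last by exists z.
  by exists (1 - z); rewrite alphaE betaE intrB.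
subst alpha; split; first exact: is_der_dcoc.
split; first exact: dcoc_not_inn.
move=> d d_der; have [u [c [u_fin [_ d_dec]]]] := der_decomposition_nonint not_int d_der.
by exists c, u; split=> // n a b; rewrite d_dec dcocE addrK.
Qed.
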